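(* Let $Q\in\mathbb{C}[x,y,z]$ be a homogeneous polynomial of degree $4$ that is $G_8$-invariant, i.e. $Q(\pm x,\pm y,\pm z)=Q(x,y,z)$ for all choices of signs, and suppose that the plane quartic $C: Q=0$ in $\mathbb{P}^2_{\mathbb{C}}$ is irreducible. If $$\mathrm{Hess}(Q)=\det\Big[\frac{\partial^2 Q}{\partial x_i\partial x_j}\Big]_{i,j}=x^2y^2z^2$$ as polynomials (with $(x_1,x_2,x_3)=(x,y,z)$), then $Q(x,y,z)=Ax^4+By^4+Cz^4$ for some $A,B,C\in\mathbb{C}$ with $ABC=\frac{1}{1728}$.
   Context: $G_8\cong\mathbb{Z}_2^3$ acts on $\mathbb{C}[x,y,z]$ through the diagonal matrices $\mathrm{Diag}(a,b,c)$, $a,b,c\in\{-1,1\}$, by $f\mapsto f(ax,by,cz)$. Consequently every $G_8$-invariant quartic form has the shape $Ax^4+By^4+Cz^4+Dx^2y^2+Ex^2z^2+Fy^2z^2$ with $A,\dots,F\in\mathbb{C}$. *)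

From HB Require Import structures.
From mathcomp Require Import all_boot all_order all_algebra.
From mathcomp Require Import Rstruct.
From mathcomp Require Import complex.
From mathcomp Require Import mpoly.
Set Implicit Arguments. Unset Strict Implicit. Unset Printing Implicit Defensive.
Import Order.TTheory GRing.Theory Num.Theory.
Local Open Scope ring_scope.

Definition CC : Type := complex Rdefinitions.R.
HB.instance Definition _ := GRing.Field.on CC.

(* polynomials in x = 'X_0, y = 'X_1, z = 'X_2 *)
Notation poly3 := {mpoly CC[3]}.

Definition diag_act (b : 'I_3 -> bool) (f : poly3) : poly3 :=
  f \mPo [tuple ((-1) ^+ b i) *: 'X_i | i < 3].

Definition G8_invariant (f : poly3) : Prop :=
  forall b : 'I_3 -> bool, diag_act b f = f.

(* Irreducible polynomial: nonconstant, and every factorisation has a constant factor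
   (nonzero constants are exactly the units of C[x,y,z]). *)
Definition mpoly_irreducible (f : poly3) : Prop :=
  (1 < msize f)%N /\
  forall g h : poly3, f = g * h -> (msize g <= 1)%N \/ (msize h <= 1)%N.

Definition hessian_mx (f : poly3) : 'M[poly3]_3 :=
  \matrix_(i < 3, j < 3) ((f ^`M(i)) ^`M(j)).
Definition Hess (f : poly3) : poly3 := \det (hessian_mx f).

(* A G8-invariant quartic is A x^4 + B y^4 + C z^4 + D x^2y^2 + E x^2z^2 + F y^2z^2, and
   comparing the coefficients of its Hessian with those of x^2y^2z^2 gives ten polynomial
   equations in A, ..., F.  Since ADE = 0 and D^2E is a multiple of A, no two of the mixed
   coefficients D, E, F can be nonzero.  If all three vanish, the x^2y^2z^2 coefficient reads
   1728ABC = 1.  If exactly one, say D, is nonzero, the equations force A = B = 0, and then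
   the quartic D (xy)^2 + C (z^2)^2 factors over the complex numbers as a difference of two
   squares. *)

From HB Require Import structures.
From mathcomp Require Import all_boot all_order all_algebra.
From mathcomp Require Import Rstruct complex mpoly.
From mathcomp Require Import ring zify.
Set Implicit Arguments.
Unset Strict Implicit.
Unset Printing Implicit Defensive.

Import GRing.Theory Num.Theory.
Local Open Scope ring_scope.

Lemma det_mx33 (R : comPzRingType) (M : 'M[R]_3) : \det M =
  M 0 0 * M 1 1 * M 2 2 + M 0 1 * M 1 2 * M 2 0 + M 0 2 * M 1 0 * M 2 1
  - M 0 0 * M 1 2 * M 2 1 - M 0 1 * M 1 0 * M 2 2 - M 0 2 * M 1 1 * M 2 0.
Proof.
(* Re-index through [inord], so that equal entries become syntactically equal atoms for [ring]. *)
pose N (i j : nat) := M (inord i) (inord j).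
have -> : M = \matrix_(i, j) N i j by apply/matrixP => i j; rewrite mxE /N !inord_val.
rewrite (expand_det_row _ 0) !big_ord_recl big_ord0 /cofactor.
rewrite !(expand_det_row _ 0) !big_ord_recl !big_ord0 /cofactor !det_mx11 !mxE /N.
ring.
Qed.

Lemma msize_gt1 (R : nzRingType) n (p : {mpoly R[n]}) m :
  p@_m != 0 -> (0 < mdeg m)%N -> (1 < msize p)%N.
Proof. by move=> pm dm; apply: leq_ltn_trans dm (msize_mdeg_lt _); rewrite mcoeff_msupp. Qed.

Lemma mul_eq0_of_sqr_mul (R : idomainType) (x y d e : R) :
  x * d * e = 0 -> x * y = e * d ^+ 2 -> d * e = 0.
Proof.
move=> xde xy; have cube : (d * e) ^+ 3 = e * y * (x * d * e).
  by transitivity (e * (d * e) * (e * d ^+ 2)); [ring | rewrite -xy; ring].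
by move/eqP: cube; rewrite xde mulr0 expf_eq0 => /eqP.
Qed.

Lemma single_cross_term (R : numDomainType) (a b c d e f : R) :
  d != 0 -> e = 0 -> f = 0 ->
  a * (12 * c * d + 2 * e * f) = d * e ^+ 2 ->
  b * (12 * c * d + 2 * e * f) = d * f ^+ 2 ->
  144 * (12 * a * b * c - a * f ^+ 2 - b * e ^+ 2 - c * d ^+ 2 + d * e * f) = 1 ->
  a = 0 /\ b = 0.
Proof.
move=> dn -> -> ha hb h1.
have cn : c != 0 by apply: contra_neq (oner_neq0 R) => c0; rewrite -h1 c0; ring.
have k : 12 * c * d != 0 by rewrite !mulf_neq0 // pnatr_eq0.
rewrite expr0n /= !(mulr0, addr0) in ha hb.
by split; apply: (mulIf k); rewrite mul0r.
Qed.

Definition lone_cross_term (R : zmodType) (A B C D E F : R) : Prop :=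
  [\/ [/\ A = 0, B = 0, E = 0, F = 0 & D != 0],
      [/\ A = 0, C = 0, D = 0, F = 0 & E != 0] |
      [/\ B = 0, C = 0, D = 0, E = 0 & F != 0]].

(* The hypotheses are the coefficients of [hess_g8_quartic] below, matched with those of
   x^2 y^2 z^2. *)
Lemma hessian_coefficients_cases (R : numFieldType) (A B C D E F : R) :
  48 * (A * D * E) = 0 -> 48 * (B * D * F) = 0 -> 48 * (C * E * F) = 0 ->
  24 * (A * (12 * B * E + 2 * D * F) - E * D ^+ 2) = 0 ->
  24 * (A * (12 * C * D + 2 * E * F) - D * E ^+ 2) = 0 ->
  24 * (B * (12 * A * F + 2 * D * E) - F * D ^+ 2) = 0 ->
  24 * (B * (12 * C * D + 2 * E * F) - D * F ^+ 2) = 0 ->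
  24 * (C * (12 * A * F + 2 * D * E) - F * E ^+ 2) = 0 ->
  24 * (C * (12 * B * E + 2 * D * F) - E * F ^+ 2) = 0 ->
  144 * (12 * A * B * C - A * F ^+ 2 - B * E ^+ 2 - C * D ^+ 2 + D * E * F) = 1 ->
  [/\ D = 0, E = 0, F = 0 & A * B * C = 1 / 1728%:R] \/ lone_cross_term A B C D E F.
Proof.
have unscale k (x : R) : k.+1%:R * x = 0 -> x = 0.
  by move/eqP; rewrite mulf_eq0 pnatr_eq0 => /eqP.
move=> /unscale e1 /unscale e2 /unscale e3 /unscale/subr0_eq e4 /unscale/subr0_eq e5.
move=> /unscale/subr0_eq e6 /unscale/subr0_eq e7 /unscale/subr0_eq e8 /unscale/subr0_eq e9 e10.
have DE : D * E = 0 := mul_eq0_of_sqr_mul e1 e4.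
have DF : D * F = 0 := mul_eq0_of_sqr_mul e2 e6.
have EF : E * F = 0 := mul_eq0_of_sqr_mul e3 e8.
have [D0|Dn] := eqVneq D 0; last first.
  have E0 : E = 0 by apply: (mulfI Dn); rewrite DE mulr0.
  have F0 : F = 0 by apply: (mulfI Dn); rewrite DF mulr0.
  have [A0 B0] := single_cross_term Dn E0 F0 e5 e7 e10.
  by right; apply: Or31.
have [E0|En] := eqVneq E 0; last first.
  have F0 : F = 0 by apply: (mulfI En); rewrite EF mulr0.
  have e10' : 144 * (12 * A * C * B - A * F ^+ 2 - C * D ^+ 2 - B * E ^+ 2 + E * D * F) = 1.
    by rewrite -[RHS]e10; ring.
  have [A0 C0] := single_cross_term En D0 F0 e4 e9 e10'.
  by right; apply: Or32.
have [F0|Fn] := eqVneq F 0; last first.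
  have e10' : 144 * (12 * B * C * A - B * E ^+ 2 - C * D ^+ 2 - A * F ^+ 2 + F * D * E) = 1.
    by rewrite -[RHS]e10; ring.
  have [B0 C0] := single_cross_term Fn D0 E0 e6 e8 e10'.
  by right; apply: Or33.
left; split=> //; apply: (mulfI (_ : 1728%:R != 0)); first by rewrite pnatr_eq0.
by rewrite mul1r divff ?pnatr_eq0 // -[RHS]e10 D0 E0 F0; ring.
Qed.

Definition mnm3 (a b c : nat) : 'X_{1..3} := [multinom [tuple a; b; c]].

Lemma mnm3E (m : 'X_{1..3}) : m = mnm3 (m 0) (m 1) (m 2).
Proof.
apply/mnmP => -[[|[|[|i]]] Hi] //=; rewrite /mnm3 multinomE /=; congr (m _); exact: val_inj.
Qed.

Lemma eq_mnm3 a b c a' b' c' :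
  (mnm3 a b c == mnm3 a' b' c') = ((a, b, c) == (a', b', c')).
Proof.
by apply/eqP/eqP => [/(congr1 (fun m : 'X_{1..3} => (m 0, m 1, m 2)))|[-> -> ->]].
Qed.

Lemma mdeg_mnm3 a b c : mdeg (mnm3 a b c) = (a + b + c)%N.
Proof. by rewrite mdegE !big_ord_recl big_ord0 /= addn0 addnA. Qed.

Lemma mnm3_subU a b c (i : 'I_3) : (mnm3 a b c - U_(i))%MM =
  mnm3 (a - (i == 0 :> nat)) (b - (i == 1 :> nat)) (c - (i == 2 :> nat)).
Proof.
apply/mnmP => -[[|[|[|j]]] Hj] //=; rewrite mnmBE mnm1E /mnm3 !multinomE /=.
all: by case: i => [[|[|[|i]]] Hi].
Qed.

Definition mono3 (a b c : nat) : poly3 := 'X_0 ^+ a * 'X_1 ^+ b * 'X_2 ^+ c.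

Lemma mono3E a b c : mono3 a b c = 'X_[mnm3 a b c].
Proof. by rewrite mpolyXE_id !big_ord_recl big_ord0 mulr1 mulrA. Qed.

Lemma mderiv_mono3_0 k a b c :
  (k%:MP * mono3 a b c)^`M(0) = (k * a%:R)%:MP * mono3 a.-1 b c.
Proof.
by rewrite mderiv_mulC !mono3E mderivX mnm3_subU !subn0 subn1 -mul_mpolyC mulrA -rmorphM.
Qed.

Lemma mderiv_mono3_1 k a b c :
  (k%:MP * mono3 a b c)^`M(1) = (k * b%:R)%:MP * mono3 a b.-1 c.
Proof.
by rewrite mderiv_mulC !mono3E mderivX mnm3_subU !subn0 subn1 -mul_mpolyC mulrA -rmorphM.
Qed.

Lemma mderiv_mono3_2 k a b c :
  (k%:MP * mono3 a b c)^`M(2) = (k * c%:R)%:MP * mono3 a b c.-1.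
Proof.
by rewrite mderiv_mulC !mono3E mderivX mnm3_subU !subn0 subn1 -mul_mpolyC mulrA -rmorphM.
Qed.

Definition g8_quartic (A B C D E F : CC) : poly3 :=
  A%:MP * mono3 4 0 0 + B%:MP * mono3 0 4 0 + C%:MP * mono3 0 0 4
  + D%:MP * mono3 2 2 0 + E%:MP * mono3 2 0 2 + F%:MP * mono3 0 2 2.

Lemma hess_g8_quartic A B C D E F : Hess (g8_quartic A B C D E F) =
    (48 * (A * D * E))%:MP * mono3 6 0 0 + (48 * (B * D * F))%:MP * mono3 0 6 0
  + (48 * (C * E * F))%:MP * mono3 0 0 6
  + (24 * (A * (12 * B * E + 2 * D * F) - E * D ^+ 2))%:MP * mono3 4 2 0
  + (24 * (A * (12 * C * D + 2 * E * F) - D * E ^+ 2))%:MP * mono3 4 0 2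
  + (24 * (B * (12 * A * F + 2 * D * E) - F * D ^+ 2))%:MP * mono3 2 4 0
  + (24 * (B * (12 * C * D + 2 * E * F) - D * F ^+ 2))%:MP * mono3 0 4 2
  + (24 * (C * (12 * A * F + 2 * D * E) - F * E ^+ 2))%:MP * mono3 2 0 4
  + (24 * (C * (12 * B * E + 2 * D * F) - E * F ^+ 2))%:MP * mono3 0 2 4
  + (144 * (12 * A * B * C - A * F ^+ 2 - B * E ^+ 2 - C * D ^+ 2 + D * E * F))%:MP
      * mono3 2 2 2.
Proof.
rewrite /Hess det_mx33 /hessian_mx !mxE /g8_quartic.
(* [ring] evaluates [n.-1] in exponents but not under [%:R], hence [succnK]. *)
rewrite !(mderivD, mderiv_mono3_0, mderiv_mono3_1, mderiv_mono3_2) !succnK /mono3.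
ring.
Qed.

Lemma mcoeff_diag_act b p m :
  (diag_act b p)@_m = (\prod_(i < 3) ((-1) ^+ b i) ^+ m i) * p@_m.
Proof.
rewrite /diag_act; elim/mpolyind: p m => [|c m' p _ _ IH] m.
  by rewrite comp_mpoly0 !mcoeff0 mulr0.
rewrite comp_mpolyD comp_mpolyZ comp_mpolyX mcoeffD mcoeffZ IH mcoeffD mcoeffZ mcoeffX.
under eq_bigr => i _ do rewrite tnth_mktuple exprZn.
rewrite scaler_prod -mpolyXE_id mcoeffZ mcoeffX.
by case: eqP => [->|_]; rewrite ?mulr1 ?mulr0; ring.
Qed.

Lemma G8_invariant_mcoeff_odd p (i : 'I_3) (m : 'X_{1..3}) :
  G8_invariant p -> odd (m i) -> p@_m = 0.
Proof.
move=> inv odd_mi; have := mcoeff_diag_act (fun j => j == i) p m.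
rewrite inv (bigD1 i) //= eqxx big1 => [|j /negbTE ->]; last by rewrite expr1n.
rewrite mulr1 expr1 -signr_odd odd_mi expr1 mulN1r => /eqP.
by rewrite eq_sym eqNr => /eqP.
Qed.

Definition g8_exponents : seq (nat * nat * nat) :=
  [:: (4, 0, 0); (0, 4, 0); (0, 0, 4); (2, 2, 0); (2, 0, 2); (0, 2, 2)].

Lemma even_quartic_exponents a b c :
  ~~ odd a -> ~~ odd b -> ~~ odd c -> (a + b + c = 4)%N -> (a, b, c) \in g8_exponents.
Proof.
move=> ea eb ec abc; have [ha hb hc] : [/\ a <= 4, b <= 4 & c <= 4]%N by split; lia.
move: a b c ha hb hc ea eb ec abc => [|[|[|[|[|?]]]]] [|[|[|[|[|?]]]]] [|[|[|[|[|?]]]]] //.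
Qed.

Lemma G8_invariant_quartic_shape Q :
  Q \is [in CC[3], 4.-homog] -> G8_invariant Q ->
  exists A B C D E F, Q = g8_quartic A B C D E F.
Proof.
move=> hom inv; exists Q@_(mnm3 4 0 0), Q@_(mnm3 0 4 0), Q@_(mnm3 0 0 4).
exists Q@_(mnm3 2 2 0), Q@_(mnm3 2 0 2), Q@_(mnm3 0 2 2).
apply/mpolyP => m; rewrite (mnm3E m) /g8_quartic !mono3E.
rewrite !mcoeffD !mcoeffCM !mcoeffX !eq_mnm3; move: (m 0) (m 1) (m 2) => a b c.
have [|notin] := boolP ((a, b, c) \in g8_exponents).
  by rewrite !inE => /or4P[|||/orP[|/orP[]]] /eqP[-> -> ->] /=; ring.
have -> : Q@_(mnm3 a b c) = 0.
  have [oa|ea] := boolP (odd a); first exact: (@G8_invariant_mcoeff_odd _ 0).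
  have [ob|eb] := boolP (odd b); first exact: (@G8_invariant_mcoeff_odd _ 1).
  have [oc|ec] := boolP (odd c); first exact: (@G8_invariant_mcoeff_odd _ 2).
  apply: (dhomog_nemf_coeff hom); rewrite /= mdeg_mnm3.
  by apply: contraNneq notin; apply: even_quartic_exponents.
have ne t : t \in g8_exponents -> (t == (a, b, c)) = false.
  by move=> t_in; apply: contraNF notin => /eqP <-.
by rewrite !ne // !mulr0 !addr0.
Qed.

Lemma g8_quartic_hessian_cases A B C D E F :
  Hess (g8_quartic A B C D E F) = mono3 2 2 2 ->
  [/\ D = 0, E = 0, F = 0 & A * B * C = 1 / 1728%:R] \/ lone_cross_term A B C D E F.
Proof.
rewrite hess_g8_quartic !mono3E => hess; have coef m := congr1 (mcoeff m) hess.
apply: hessian_coefficients_cases;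
  [ move: (coef (mnm3 6 0 0)) | move: (coef (mnm3 0 6 0)) | move: (coef (mnm3 0 0 6))
  | move: (coef (mnm3 4 2 0)) | move: (coef (mnm3 4 0 2)) | move: (coef (mnm3 2 4 0))
  | move: (coef (mnm3 0 4 2)) | move: (coef (mnm3 2 0 4)) | move: (coef (mnm3 0 2 4))
  | move: (coef (mnm3 2 2 2)) ];
  rewrite !mcoeffD !mcoeffCM !mcoeffX !eq_mnm3 /= => h; rewrite -[RHS]h; ring.
Qed.

Lemma sum_sqr_not_irreducible (a b : CC) (m1 m2 : 'X_{1..3}) :
  a != 0 -> m1 != m2 -> (0 < mdeg m1)%N ->
  ~ mpoly_irreducible (a *: 'X_[m1] ^+ 2 + b *: 'X_[m2] ^+ 2).
Proof.
move=> an m12 dm [_ irr]; pose w := sqrtC (- b / a).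
have bE : b = - (a * w ^+ 2) by rewrite sqrtCK mulrC divfK // opprK.
have m21 : (m2 == m1) = false by rewrite eq_sym (negbTE m12).
have [] := irr (a *: ('X_[m1] - w *: 'X_[m2])) ('X_[m1] + w *: 'X_[m2]).
- by rewrite bE -!mul_mpolyC rmorphN rmorphM /=; ring.
- rewrite leqNgt (msize_gt1 (m := m1)) //.
  by rewrite mcoeffZ mcoeffB mcoeffZ !mcoeffX eqxx m21 mulr0 subr0 mulr1.
- rewrite leqNgt (msize_gt1 (m := m1)) //.
  by rewrite mcoeffD mcoeffZ !mcoeffX eqxx m21 mulr0 addr0 oner_neq0.
Qed.

Lemma g8_quartic_lone_cross_not_irreducible A B C D E F :
  lone_cross_term A B C D E F -> ~ mpoly_irreducible (g8_quartic A B C D E F).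
Proof.
case=> -[-> -> -> -> nz].
- have -> : g8_quartic 0 0 C D 0 0 = D *: 'X_[mnm3 1 1 0] ^+ 2 + C *: 'X_[mnm3 0 0 2] ^+ 2.
    by rewrite -!mono3E /g8_quartic /mono3 -!mul_mpolyC; ring.
  by apply: sum_sqr_not_irreducible; rewrite ?mdeg_mnm3.
- have -> : g8_quartic 0 B 0 0 E 0 = E *: 'X_[mnm3 1 0 1] ^+ 2 + B *: 'X_[mnm3 0 2 0] ^+ 2.
    by rewrite -!mono3E /g8_quartic /mono3 -!mul_mpolyC; ring.
  by apply: sum_sqr_not_irreducible; rewrite ?mdeg_mnm3.
- have -> : g8_quartic A 0 0 0 0 F = F *: 'X_[mnm3 0 1 1] ^+ 2 + A *: 'X_[mnm3 2 0 0] ^+ 2.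
    by rewrite -!mono3E /g8_quartic /mono3 -!mul_mpolyC; ring.
  by apply: sum_sqr_not_irreducible; rewrite ?mdeg_mnm3.
Qed.

Lemma g8_quartic_diagonal A B C :
  g8_quartic A B C 0 0 0 = A *: 'X_0 ^+ 4 + B *: 'X_1 ^+ 4 + C *: 'X_2 ^+ 4.
Proof. by rewrite /g8_quartic /mono3 -!mul_mpolyC; ring. Qed.

Theorem theorem2p3 (Q : {mpoly CC[3]}) :
  Q \is [in CC[3], 4.-homog] ->
  G8_invariant Q ->
  mpoly_irreducible Q ->
  Hess Q = 'X_0 ^+ 2 * 'X_1 ^+ 2 * 'X_2 ^+ 2 ->
  exists A B C : CC,
    Q = A *: 'X_0 ^+ 4 + B *: 'X_1 ^+ 4 + C *: 'X_2 ^+ 4 /\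
    A * B * C = 1 / 1728%:R.
Proof.
move=> hom inv irr hess.
have [A [B [C [D [E [F QE]]]]]] := G8_invariant_quartic_shape hom inv.
rewrite {}QE in irr hess *.
have [[-> -> -> ABC]|cross] := g8_quartic_hessian_cases hess; last first.
  by case: (g8_quartic_lone_cross_not_irreducible cross irr).
by exists A, B, C; rewrite g8_quartic_diagonal.
Qed.
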